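(* For every integer $n\ge 0$, $$x\prod_{i=0}^{n}\bigl(1+tx^{2^{i}}+x^{2^{i+1}}\bigr)=\sum_{i=1}^{2^{n+1}}\Bigl(B_i(t)+B_{2^{n+1}-i}(t)\,x^{2^{n+1}}\Bigr)x^{i}$$ as an identity in $\mathbb{Z}[t,x]$.
   Context: The Stern polynomials $B_n(t)\in\mathbb{Z}[t]$, $n\ge 0$, are defined by $B_0(t)=0$, $B_1(t)=1$, $B_{2n}(t)=tB_n(t)$ and $B_{2n+1}(t)=B_n(t)+B_{n+1}(t)$ for $n\ge 1$. *)

(* Z[t,x] is represented as {poly {poly int}}:
   the outer variable is x, the inner (coefficient) variable is t. *)
From HB Require Import structures.
From mathcomp Require Import all_boot all_order all_algebra.
From Stdlib Require Import Lia.
Set Implicit Arguments. Unset Strict Implicit. Unset Printing Implicit Defensive.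
Import Order.TTheory GRing.Theory Num.Theory.
Local Open Scope ring_scope.

(* Stern polynomials, computed with fuel k (k > n suffices). *)
Fixpoint stern_fuel (k n : nat) : {poly int} :=
  match k with
  | 0 => 0
  | k'.+1 =>
    match n with
    | 0 => 0
    | 1 => 1
    | _ => if odd n then stern_fuel k' n./2 + stern_fuel k' (n./2).+1
           else 'X * stern_fuel k' n./2
    end
  end.

Definition stern (n : nat) : {poly int} := stern_fuel n.+1 n.

Lemma stern_fuel_irr k k' n :
  (n < k)%N -> (n < k')%N -> stern_fuel k n = stern_fuel k' n.
Proof.
elim: k k' n => [|k IH] [|k'] n //=.
case: n => [|[|m]] // hk hk'.
have Hm := odd_double_half m.
have Hh : (m.+2)./2 = (m./2).+1 by [].
rewrite Hh /=.
case: ifP => ho.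
- have ho' : odd m by move: ho => /=; rewrite negbK.
  move: Hm hk hk'; rewrite ho' -muln2 add1n.
  move: (m./2) => h <- hk hk'.
  move/ssrnat.leP: hk; move/ssrnat.leP: hk'; rewrite -!multE => hk' hk.
  rewrite (IH k' h.+1); try (apply/ssrnat.leP; lia).
  by rewrite (IH k' h.+2) //; apply/ssrnat.leP; lia.
- have ho' : ~~ odd m by move: ho => /=; rewrite negbK => ->.
  move: Hm hk hk'; rewrite (negbTE ho') -muln2 add0n.
  move: (m./2) => h <- hk hk'.
  move/ssrnat.leP: hk; move/ssrnat.leP: hk'; rewrite -!multE => hk' hk.
  by rewrite (IH k' h.+1) //; apply/ssrnat.leP; lia.
Qed.


Lemma stern_fuelS k n : (2 <= n)%N ->
  stern_fuel k.+1 n = if odd n then stern_fuel k n./2 + stern_fuel k (n./2).+1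
                      else 'X * stern_fuel k n./2.
Proof. by case: n => [|[|n]]. Qed.

Lemma stern0 : stern 0 = 0. Proof. by []. Qed.
Lemma stern1 : stern 1 = 1. Proof. by []. Qed.
Lemma stern_even n : (1 <= n)%N -> stern n.*2 = 'X * stern n.
Proof.
case: n => // n _; rewrite /stern stern_fuelS; last by rewrite doubleS.
rewrite odd_double doubleK; congr (_ * _); apply: stern_fuel_irr => //.
by rewrite -addnn addSn ltnS addnS ltnS leq_addr.
Qed.
Lemma stern_odd n : (1 <= n)%N -> stern n.*2.+1 = stern n + stern n.+1.
Proof.
case: n => // n _; rewrite /stern stern_fuelS; last by rewrite doubleS.
have e : ((n.+1).*2.+1)./2 = n.+1 by rewrite -uphalfE uphalf_double.
rewrite e oddS odd_double.
apply: (f_equal2 +%R); apply: stern_fuel_irr => //;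
  by rewrite -addnn ?addSn ?addnS ?ltnS ?leqW ?leq_addr.
Qed.

Definition tvar : {poly {poly int}} := ('X : {poly int})%:P.
Definition xvar : {poly {poly int}} := 'X.

From HB Require Import structures.
From mathcomp Require Import all_boot all_order all_algebra.
From mathcomp Require Import zify ring.
Import GRing.Theory.
Local Open Scope ring_scope.

(* Write B_k for [stern k] and N for a power of two.  The proof rests on the
   "tent" polynomial
        T_N(x) = sum_(k <= 2N) B_(min(k, 2N-k)) x^k,
   whose coefficients rise along B_0, ..., B_N and fall back along
   B_N, ..., B_0.
   1. Reflection rule: B_(2^m + j) = t B_j + B_(2^m - j) for j <= 2^m,
      by induction on m using the two Stern recurrences.
   2. Doubling: T_(2N) = T_N (1 + t x^N + x^(2N)); comparing coefficients
      reduces this to the reflection rule.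
   3. Since T_1 = x, induction on n gives
      x prod_(i < n) (1 + t x^(2^i) + x^(2^(i+1))) = T_(2^n).
   4. Splitting T_N into its rising half (degrees 1..N) and falling half
      (degrees N+1..2N) yields the right-hand side of the theorem. *)

Lemma stern_double n : stern n.*2 = 'X * stern n.
Proof. by case: n => [|n]; [rewrite mulr0 | exact: stern_even]. Qed.

Lemma stern_double_succ n : stern n.*2.+1 = stern n + stern n.+1.
Proof. by case: n => [|n]; [rewrite stern0 add0r | exact: stern_odd]. Qed.

Lemma stern_pow2_add m j : (j <= 2 ^ m)%N ->
  stern (2 ^ m + j) = 'X * stern j + stern (2 ^ m - j).
Proof.
elim: m j => [|m IH] j.
  rewrite expn0; case: j => [|[|]] // _; first by rewrite stern0 mulr0 add0r.
  by rewrite stern0 addr0; exact: (stern_double 1).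
rewrite expnS; set M := (2 ^ m)%N => hj.
have [j_odd | j_even] := boolP (odd j);
  rewrite -(odd_double_half j) ?(negbTE j_even) ?j_odd /= in hj *;
  move: (j./2) hj => i hj.
- (* j = 2i + 1 with i < M: both sides use the odd recurrence. *)
  have -> : (2 * M + i.*2.+1 = (M + i).*2.+1)%N by lia.
  have -> : (2 * M - i.*2.+1 = (M - i.+1).*2.+1)%N by lia.
  rewrite !stern_double_succ -addnS !IH; try lia.
  have -> : (M - i.+1).+1 = (M - i)%N by lia.
  ring.
- (* j = 2i with i <= M: both sides use the even recurrence. *)
  have -> : (2 * M + i.*2 = (M + i).*2)%N by lia.
  have -> : (2 * M - i.*2 = (M - i).*2)%N by lia.
  rewrite !stern_double IH; [ring | lia].
Qed.

Definition stern_tent (N : nat) : {poly {poly int}} :=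
  \poly_(k < N.*2.+1) stern (if (k <= N)%N then k else (N.*2 - k)%N).

Lemma coef_stern_tent N k : (stern_tent N)`_k =
  if (k <= N.*2)%N then stern (if (k <= N)%N then k else (N.*2 - k)%N) else 0.
Proof. by rewrite coef_poly ltnS. Qed.

Lemma stern_tent1 : stern_tent 1 = xvar.
Proof.
apply/polyP => k; rewrite coef_stern_tent /xvar coefX.
by case: k => [|[|[|k]]] //=; rewrite ?stern0 ?stern1.
Qed.

(* Doubling: the coefficient of x^k in T_N (1 + t x^N + x^(2N)) is
   c_k + t c_(k-N) + c_(k-2N), with c the coefficients of T_N; on each of the
   ranges k < N, N <= k < 2N, 2N <= k < 3N, 3N <= k <= 4N at most two nonzero terms
   survive, and the reflection rule (with 2^m = N) identifies their sum
   with the tent coefficient of T_(2N). *)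
Lemma stern_tent_double m : let N := (2 ^ m)%N in
  stern_tent N.*2 = stern_tent N * (1 + tvar * xvar ^+ N + xvar ^+ N.*2).
Proof.
move=> N; have reflect_N := @stern_pow2_add m.
apply/polyP => k.
rewrite !mulrDr mulr1 mulrCA !coefD /tvar /xvar coefCM !coefMXn !coef_stern_tent.
repeat (case: ifPn => ?; try (exfalso; lia)).
all: rewrite ?mulr0 ?addr0 ?add0r //.
- have -> : (k - N = 0)%N by lia.
  by rewrite stern0 mulr0 addr0.
- have -> : (N.*2 - k = N - (k - N))%N by lia.
  by rewrite addrC -reflect_N; [congr stern; lia | lia].
- have -> : (N.*2 - k = 0)%N by lia.
  have -> : (k - N.*2 = 0)%N by lia.
  have -> : (k - N = N)%N by lia.
  have -> : k = (N + N)%N by lia.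
  by rewrite reflect_N // subnn !stern0 add0r addr0.
- have -> : (N.*2.*2 - k = N + (N - (k - N.*2)))%N by lia.
  rewrite reflect_N; last lia.
  have -> : (N.*2 - (k - N) = N - (k - N.*2))%N by lia.
  by have -> : (N - (N - (k - N.*2)) = k - N.*2)%N by lia.
- by have -> : (N.*2.*2 - k = N.*2 - (k - N.*2))%N by lia.
Qed.

Lemma stern_tent_prod n :
  xvar * \prod_(i < n) (1 + tvar * xvar ^+ (2 ^ i) + xvar ^+ (2 ^ i.+1))
  = stern_tent (2 ^ n).
Proof.
elim: n => [|n IH]; first by rewrite big_ord0 mulr1 expn0 stern_tent1.
by rewrite big_ord_recr /= mulrA IH expnS mul2n stern_tent_double.
Qed.

(* Splitting T_N into its rising half (x^1 .. x^N, coefficients B_i) and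
   its falling half (x^(N+i), coefficients B_(N-i)); the constant term is
   B_0 = 0. *)
Lemma stern_tent_halves N : stern_tent N = \sum_(1 <= i < N.+1)
      ((stern i)%:P + (stern (N - i))%:P * xvar ^+ N) * xvar ^+ i.
Proof.
rewrite /stern_tent poly_def -(big_mkord xpredT
  (fun i => stern (if (i <= N)%N then i else (N.*2 - i)%N) *: 'X^i)).
rewrite (big_cat_nat _ (n := N.+1)) //=; last by rewrite ltnS -addnn leq_addl.
rewrite big_ltn // leq0n stern0 scale0r add0r.
have -> : N.+1 = (1 + N)%N by rewrite add1n.
rewrite big_addn.
under [in RHS]eq_bigr => i _ do rewrite mulrDl -mulrA -exprD.
rewrite big_split /=; congr (_ + _).
  apply: eq_big_nat => i /andP[_ hi]; rewrite mul_polyC /xvar.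
  by have -> : (i <= N)%N by lia.
have -> : (N.*2.+1 - N = N.+1)%N by lia.
apply: eq_big_nat => i /andP[i_pos hi]; rewrite mul_polyC /xvar.
have -> : (i + N <= N)%N = false by lia.
have -> : (N.*2 - (i + N) = N - i)%N by lia.
by rewrite addnC.
Qed.

Theorem theorem3p2 (n : nat) :
  xvar * \prod_(i < n.+1) (1 + tvar * xvar ^+ (2 ^ i) + xvar ^+ (2 ^ i.+1))
  = \sum_(1 <= i < (2 ^ n.+1).+1)
      ((stern i)%:P + (stern (2 ^ n.+1 - i))%:P * xvar ^+ (2 ^ n.+1)) * xvar ^+ i.
Proof. by rewrite stern_tent_prod stern_tent_halves. Qed.
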